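(* Let $V\in C^\infty(\mathbb{R})$ be real-valued, let $D=\frac{d}{dx}$, let $L=D^2+V(x)$, and let $N\ge 0$ be an integer. The following are equivalent: (i) there exists a linear differential operator $Q=D^{2N+1}+\sum_{j=0}^{2N} q_j(x)D^j$ with $q_j\in C^\infty(\mathbb{R})$ such that $[Q,L]=0$; (ii) there exist functions $a_0,\dots,a_N,b_0,\dots,b_N\in C^\infty(\mathbb{R})$ with $a_N\equiv 1$, and a function $r(x,\varepsilon)$, such that for every real $\varepsilon$ the first-order operator $$\hat Q_\varepsilon=\Big(\sum_{j=0}^N a_j(x)\varepsilon^j\Big)D+\sum_{j=0}^N b_j(x)\varepsilon^j$$ is a Lie symmetry of the equation $(L+\varepsilon)\psi=0$, i.e. $[L+\varepsilon,\hat Q_\varepsilon]=r(x,\varepsilon)\,(L+\varepsilon)$ as differential operators.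
   Context: Sign convention: the paper writes its Hamiltonian as $H=-\frac{d^2}{dx^2}+V$, but its determining equations and recursion operators match the operator $L=\frac{d^2}{dx^2}+V$ (equivalently $H=-\frac{d^2}{dx^2}-V$); the statement is given in that consistent convention. A differential operator $\hat Q$ is a (Lie) symmetry of $A\psi=0$ if $[A,\hat Q]=PA$ for some differential operator $P$; for first-order $\hat Q$ and second-order $A=L+\varepsilon$, $P$ is multiplication by a function $r$. *)

From Stdlib Require Import Reals.
From Coquelicot Require Import Coquelicot.
Open Scope R_scope.

Definition smooth (f : R -> R) : Prop :=
  forall (n : nat) (x : R), ex_derive_n f n x.

Definition opL (V : R -> R) (psi : R -> R) : R -> R :=
  fun x => Derive_n psi 2 x + V x * psi x.

Definition opLeps (V : R -> R) (eps : R) (psi : R -> R) : R -> R :=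
  fun x => opL V psi x + eps * psi x.

Definition opQ (N : nat) (q : nat -> R -> R) (psi : R -> R) : R -> R :=
  fun x => Derive_n psi (2 * N + 1) x
           + sum_f_R0 (fun j => q j x * Derive_n psi j x) (2 * N).

Definition polyeps (N : nat) (c : nat -> R -> R) (eps : R) (x : R) : R :=
  sum_f_R0 (fun j => c j x * eps ^ j) N.

Definition opQhat (N : nat) (a b : nat -> R -> R) (eps : R)
  (psi : R -> R) : R -> R :=
  fun x => polyeps N a eps x * Derive psi x + polyeps N b eps x * psi x.

(* Dividing by powers of [L] writes every operator of order [2N+1] with leading
   coefficient [1] uniquely as [Q = sum_(j<=N) (U_j D + W_j) L^j] with [U_N = 1].  Since
   [[L, u D + w] = (u'' + 2 w') D + (w'' - u V' - 2 u' V) + 2 u' L], the equation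
   [[Q, L] = 0] becomes the triangular system [U_j'' + 2 W_j' = 0] and
   [W_j'' - U_j V' - 2 U_j' V + 2 U_(j-1)' = 0], which for [a_j = (-1)^(N-j) U_j] is the
   Lenard recursion [-a_j'''/2 - a_j V' - 2 a_j' V = 2 a_(j-1)'].  By the same commutator
   formula with [V + eps] in place of [V], [A D + B] is a Lie symmetry of [L + eps] iff
   [A'' + 2 B' = 0] and [B'' - A V' - 2 A' (V + eps) = 0]; eliminating [B] and comparing
   powers of [eps] in [A = sum_j a_j eps^j] gives again the Lenard recursion. *)

From Stdlib Require Import Reals Lra Lia FunctionalExtensionality.
From Coquelicot Require Import Coquelicot.
Open Scope R_scope.

Lemma smooth_ex_derive f x : smooth f -> ex_derive f x.
Proof. intros Hf; exact (Hf 1%nat x). Qed.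

Lemma Derive_n_Derive f n x : Derive_n (Derive f) n x = Derive_n f (S n) x.
Proof. rewrite <- Nat.add_1_r, <- Derive_n_comp; reflexivity. Qed.

Lemma smooth_Derive f : smooth f -> smooth (Derive f).
Proof.
  intros Hf [|n] x; [exact I|].
  apply (ex_derive_ext (Derive_n f (S n))); [intros t; symmetry; apply Derive_n_Derive|].
  exact (Hf (S (S n)) x).
Qed.

Lemma smooth_Derive_n f k : smooth f -> smooth (Derive_n f k).
Proof. intros Hf; induction k as [|k IHk]; [exact Hf | exact (smooth_Derive _ IHk)]. Qed.

Ltac smooth_Derives :=
  repeat match goal with |- smooth (Derive _) => apply smooth_Derive end.

Lemma smooth_const c : smooth (fun _ => c).
Proof. intros n x; apply ex_derive_n_const. Qed.

Lemma smooth_plus f g : smooth f -> smooth g -> smooth (fun x => f x + g x).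
Proof.
  intros Hf Hg n x.
  apply ex_derive_n_plus; apply filter_forall; intros y k _; [apply Hf | apply Hg].
Qed.

Lemma smooth_scal c f : smooth f -> smooth (fun x => c * f x).
Proof. intros Hf n x; exact (ex_derive_n_scal_l f n c x (Hf n x)). Qed.

Lemma smooth_minus f g : smooth f -> smooth g -> smooth (fun x => f x - g x).
Proof.
  intros Hf Hg n x.
  apply ex_derive_n_minus; apply filter_forall; intros y k _; [apply Hf | apply Hg].
Qed.

Lemma ex_derive_n_S_Derive h n x :
  ex_derive h x -> ex_derive_n (Derive h) n x -> ex_derive_n h (S n) x.
Proof.
  intros H1 H2; destruct n as [|n]; [exact H1|].
  apply (ex_derive_ext (Derive_n (Derive h) n)); [intros t; apply Derive_n_Derive | exact H2].
Qed.

Lemma smooth_mult f g : smooth f -> smooth g -> smooth (fun x => f x * g x).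
Proof.
  enough (H : forall n f g, smooth f -> smooth g ->
            forall k x, (k <= n)%nat -> ex_derive_n (fun x => f x * g x) k x)
    by (intros Hf Hg n x; exact (H n f g Hf Hg n x (le_n n))).
  induction n as [|n IHn]; intros f' g' Hf Hg [|k] x Hk; try exact I; [lia|].
  apply ex_derive_n_S_Derive.
  - apply ex_derive_mult; apply smooth_ex_derive; assumption.
  - apply (ex_derive_n_ext (fun t => Derive f' t * g' t + f' t * Derive g' t)).
    { intros t; symmetry; apply Derive_mult; apply smooth_ex_derive; assumption. }
    apply ex_derive_n_plus; apply filter_forall; intros y i Hi;
      apply IHn; auto using smooth_Derive; lia.
Qed.

Lemma smooth_sum (F : nat -> R -> R) n :
  (forall j, (j <= n)%nat -> smooth (F j)) -> smooth (fun x => sum_f_R0 (fun j => F j x) n).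
Proof.
  induction n as [|n IHn]; intros HF; [exact (HF O (le_n O))|].
  apply smooth_plus; [apply IHn; auto | apply HF; auto].
Qed.

Lemma smooth_shifted_pow a n : smooth (fun y => (y - a) ^ n).
Proof. intros k x; apply (ex_derive_n_comp_trans (fun y => y ^ n)), ex_derive_n_pow. Qed.

Lemma ex_derive_sum (F : nat -> R -> R) n x :
  (forall j, (j <= n)%nat -> ex_derive (F j) x) ->
  ex_derive (fun y => sum_f_R0 (fun j => F j y) n) x.
Proof.
  induction n as [|n IHn]; intros HF; [apply HF; auto|].
  apply (ex_derive_plus (fun y => sum_f_R0 (fun j => F j y) n) (F (S n))); auto.
Qed.

Lemma Derive_sum (F : nat -> R -> R) n x :
  (forall j, (j <= n)%nat -> ex_derive (F j) x) ->
  Derive (fun y => sum_f_R0 (fun j => F j y) n) x = sum_f_R0 (fun j => Derive (F j) x) n.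
Proof.
  induction n as [|n IHn]; intros HF; [reflexivity|].
  rewrite tech5, <- IHn by auto.
  apply (Derive_plus (fun y => sum_f_R0 (fun j => F j y) n) (F (S n))); auto using ex_derive_sum.
Qed.

Lemma Derive_const_fun f c x : (forall y, f y = c) -> Derive f x = 0.
Proof. intros Hf; rewrite (Derive_ext f (fun _ => c) x Hf); apply Derive_const. Qed.

(** * Linear differential operators with coefficient sequences *)

Definition diffop (M : nat) (c : nat -> R -> R) (psi : R -> R) (x : R) : R :=
  sum_f_R0 (fun k => c k x * Derive_n psi k x) M.

Definition smooth_coefs (c : nat -> R -> R) : Prop := forall k, smooth (c k).

Definition supported (M : nat) (c : nat -> R -> R) : Prop :=
  forall k x, (M < k)%nat -> c k x = 0.

(* Coefficients of [D o diffop _ c]: [D (c_k psi^(k)) = c_k' psi^(k) + c_k psi^(k+1)]. *)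
Definition dcoefs (c : nat -> R -> R) (k : nat) (x : R) : R :=
  Derive (c k) x + match k with O => 0 | S k' => c k' x end.

Lemma diffop_S M c psi x :
  diffop (S M) c psi x = diffop M c psi x + c (S M) x * Derive_n psi (S M) x.
Proof. reflexivity. Qed.

Lemma diffop_ext M c d psi x :
  (forall k, (k <= M)%nat -> c k x = d k x) -> diffop M c psi x = diffop M d psi x.
Proof. intros Hcd; apply sum_eq; intros k Hk; rewrite Hcd; auto. Qed.

Lemma diffop_plus M c d psi x :
  diffop M (fun k y => c k y + d k y) psi x = diffop M c psi x + diffop M d psi x.
Proof. unfold diffop; rewrite <- sum_plus; apply sum_eq; intros; ring. Qed.

Lemma diffop_scal M (f : R -> R) c psi x :
  diffop M (fun k y => f y * c k y) psi x = f x * diffop M c psi x.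
Proof. unfold diffop; rewrite scal_sum; apply sum_eq; intros; ring. Qed.

Lemma diffop_supported M K c psi x :
  supported M c -> (M <= K)%nat -> diffop K c psi x = diffop M c psi x.
Proof.
  intros Hc HK; induction HK as [|K HK IH]; [reflexivity|].
  rewrite diffop_S, IH, (Hc (S K)); [ring | lia].
Qed.

Lemma smooth_dcoefs c : smooth_coefs c -> smooth_coefs (dcoefs c).
Proof.
  intros Hc [|k]; apply smooth_plus; auto using smooth_Derive, smooth_const.
Qed.

Lemma supported_dcoefs M c : supported M c -> supported (S M) (dcoefs c).
Proof.
  intros Hc [|k] x Hk; [lia|]; unfold dcoefs.
  rewrite (Derive_const_fun _ 0), Hc; [ring | lia | intros y; apply Hc; lia].
Qed.

Lemma Derive_diffop M c psi x : smooth_coefs c -> supported M c -> smooth psi ->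
  Derive (diffop M c psi) x = diffop (S M) (dcoefs c) psi x.
Proof.
  intros Hc Hsupp Hpsi; unfold diffop at 1.
  rewrite Derive_sum
    by (intros; apply ex_derive_mult; apply smooth_ex_derive; auto using smooth_Derive_n).
  unfold dcoefs; rewrite diffop_plus, diffop_S.
  rewrite (Derive_const_fun (c (S M)) 0) by (intros; apply Hsupp; lia).
  unfold diffop at 2; rewrite (decomp_sum _ (S M)) by lia; simpl pred.
  rewrite !Rmult_0_l, Rplus_0_r, Rplus_0_l; unfold diffop; rewrite <- sum_plus.
  apply sum_eq; intros k _.
  apply Derive_mult; apply smooth_ex_derive; auto using smooth_Derive_n.
Qed.

Lemma Derive_n_shifted_pow a n k x : (k <= n)%nat ->
  Derive_n (fun y => (y - a) ^ n) k x
  = INR (Factorial.fact n) / INR (Factorial.fact (n - k)) * (x - a) ^ (n - k).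
Proof.
  intros Hk; change (Derive_n (fun y => (fun t => t ^ n) (y + - a)) k x
    = INR (Factorial.fact n) / INR (Factorial.fact (n - k)) * (x + - a) ^ (n - k)).
  rewrite Derive_n_comp_trans; apply Derive_n_pow_smalli, Hk.
Qed.

Lemma diffop_shifted_pow n c a :
  diffop n c (fun y => (y - a) ^ n) a = c n a * INR (Factorial.fact n).
Proof.
  assert (Htop : Derive_n (fun y => (y - a) ^ n) n a = INR (Factorial.fact n)).
  { rewrite Derive_n_shifted_pow, Nat.sub_diag by lia; simpl; field; apply INR_fact_neq_0. }
  destruct n as [|n]; [exact (f_equal (Rmult (c O a)) Htop)|].
  rewrite diffop_S, Htop; unfold diffop.
  rewrite sum_eq_R0; [ring|]; intros k Hk.
  rewrite Derive_n_shifted_pow, Rminus_diag, pow_i by lia; ring.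
Qed.

(* Testing against [(y - x0)^M] isolates the top coefficient at [x0]. *)
Lemma diffop_coefs_zero M c x0 :
  (forall psi, smooth psi -> diffop M c psi x0 = 0) -> forall k, (k <= M)%nat -> c k x0 = 0.
Proof.
  induction M as [|M IHM]; intros Hzero k Hk.
  - assert (Hk0 : k = O) by lia; subst k.
    specialize (Hzero _ (smooth_const 1)); unfold diffop in Hzero; simpl in Hzero; lra.
  - assert (Htop : c (S M) x0 = 0).
    { pose proof (Hzero _ (smooth_shifted_pow x0 (S M))) as H.
      rewrite diffop_shifted_pow in H.
      apply Rmult_integral in H as [H|H]; [exact H | exfalso; exact (INR_fact_neq_0 _ H)]. }
    destruct (Nat.eq_dec k (S M)) as [->|Hne]; [exact Htop|].
    apply IHM; [|lia]; intros psi Hpsi.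
    rewrite <- (Hzero psi Hpsi), diffop_S, Htop; ring.
Qed.

Definition L_coefs (V : R -> R) (c : nat -> R -> R) (k : nat) (x : R) : R :=
  dcoefs (dcoefs c) k x + V x * c k x.

Fixpoint Lpow (V : R -> R) (j : nat) (psi : R -> R) : R -> R :=
  match j with O => psi | S j' => opL V (Lpow V j' psi) end.

Fixpoint Lpow_coefs (V : R -> R) (j : nat) : nat -> R -> R :=
  match j with
  | O => fun k _ => match k with O => 1 | S _ => 0 end
  | S j' => L_coefs V (Lpow_coefs V j')
  end.

Lemma Lpow_opL V j psi : Lpow V j (opL V psi) = opL V (Lpow V j psi).
Proof. induction j as [|j IHj]; simpl; congruence. Qed.

Section Powers_of_L.

Variable V : R -> R.
Hypothesis HV : smooth V.

Lemma smooth_opL psi : smooth psi -> smooth (opL V psi).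
Proof. intros Hpsi; apply smooth_plus; [apply smooth_Derive_n | apply smooth_mult]; auto. Qed.

Lemma smooth_Lpow j psi : smooth psi -> smooth (Lpow V j psi).
Proof. intros Hpsi; induction j; simpl; auto using smooth_opL. Qed.

Lemma smooth_L_coefs c : smooth_coefs c -> smooth_coefs (L_coefs V c).
Proof.
  intros Hc k; apply smooth_plus;
    [apply smooth_dcoefs, smooth_dcoefs, Hc | apply smooth_mult; auto].
Qed.

Lemma supported_L_coefs M c : supported M c -> supported (S (S M)) (L_coefs V c).
Proof.
  intros Hc k x Hk; unfold L_coefs.
  rewrite (supported_dcoefs _ _ (supported_dcoefs _ _ Hc)), Hc by lia; ring.
Qed.

Lemma L_coefs_top M c x : supported M c -> L_coefs V c (S (S M)) x = c M x.
Proof.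
  intros Hc; unfold L_coefs, dcoefs at 1.
  rewrite (Derive_const_fun _ 0) by (intros y; apply (supported_dcoefs M c Hc); lia).
  unfold dcoefs; rewrite (Derive_const_fun _ 0) by (intros; apply Hc; lia).
  rewrite (Hc (S (S M))) by lia; ring.
Qed.

Lemma opL_diffop M c psi x : smooth_coefs c -> supported M c -> smooth psi ->
  opL V (diffop M c psi) x = diffop (S (S M)) (L_coefs V c) psi x.
Proof.
  intros Hc Hsupp Hpsi; unfold opL, L_coefs.
  change (Derive_n ?f 2 x) with (Derive (Derive f) x).
  rewrite (Derive_ext _ _ x (fun y => Derive_diffop M c psi y Hc Hsupp Hpsi)).
  rewrite Derive_diffop by auto using smooth_dcoefs, supported_dcoefs.
  rewrite diffop_plus, diffop_scal, (diffop_supported M (S (S M)) c) by (auto; lia).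
  reflexivity.
Qed.

Lemma smooth_Lpow_coefs j : smooth_coefs (Lpow_coefs V j).
Proof.
  induction j as [|j IHj]; [intros [|k]; simpl; apply smooth_const | apply smooth_L_coefs, IHj].
Qed.

Lemma supported_Lpow_coefs j : supported (2 * j) (Lpow_coefs V j).
Proof.
  induction j as [|j IHj]; [intros [|k] x Hk; [lia | reflexivity]|].
  replace (2 * S j)%nat with (S (S (2 * j))) by lia; apply supported_L_coefs, IHj.
Qed.

Lemma Lpow_coefs_top j x : Lpow_coefs V j (2 * j) x = 1.
Proof.
  induction j as [|j IHj]; [reflexivity|].
  replace (2 * S j)%nat with (S (S (2 * j))) by lia; simpl Lpow_coefs.
  rewrite L_coefs_top; [exact IHj | apply supported_Lpow_coefs].
Qed.

Lemma Lpow_diffop j psi : smooth psi -> Lpow V j psi = diffop (2 * j) (Lpow_coefs V j) psi.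
Proof.
  intros Hpsi; induction j as [|j IHj].
  - apply functional_extensionality; intros x; unfold diffop; simpl; ring.
  - apply functional_extensionality; intros x; simpl Lpow; rewrite IHj, opL_diffop;
      auto using smooth_Lpow_coefs, supported_Lpow_coefs.
    replace (2 * S j)%nat with (S (S (2 * j))) by lia; reflexivity.
Qed.

End Powers_of_L.

Definition opT (u w phi : R -> R) (x : R) : R := u x * Derive phi x + w x * phi x.

Definition T_coefs (u w : R -> R) (c : nat -> R -> R) (k : nat) (x : R) : R :=
  u x * dcoefs c k x + w x * c k x.

Lemma smooth_T_coefs u w c :
  smooth u -> smooth w -> smooth_coefs c -> smooth_coefs (T_coefs u w c).
Proof.
  intros Hu Hw Hc k; apply smooth_plus; apply smooth_mult; auto; apply smooth_dcoefs, Hc.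
Qed.

Lemma supported_T_coefs M u w c : supported M c -> supported (S M) (T_coefs u w c).
Proof.
  intros Hc k x Hk; unfold T_coefs; rewrite (supported_dcoefs M), Hc by (auto; lia); ring.
Qed.

Lemma T_coefs_top M u w c x : supported M c -> T_coefs u w c (S M) x = u x * c M x.
Proof.
  intros Hc; unfold T_coefs, dcoefs.
  rewrite (Derive_const_fun _ 0) by (intros; apply Hc; lia).
  rewrite (Hc (S M)) by lia; ring.
Qed.

Lemma opT_diffop M u w c psi x : smooth_coefs c -> supported M c -> smooth psi ->
  opT u w (diffop M c psi) x = diffop (S M) (T_coefs u w c) psi x.
Proof.
  intros Hc Hsupp Hpsi; unfold opT, T_coefs.
  rewrite Derive_diffop, diffop_plus, !diffop_scal, (diffop_supported M (S M) c) by (auto; lia).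
  reflexivity.
Qed.

Ltac eta_Derive :=
  repeat match goal with |- context [Derive (fun t => ?f t)] =>
    change (Derive (fun t => f t)) with (Derive f) end.

Lemma comm_opL_opT P u w phi x : smooth P -> smooth u -> smooth w -> smooth phi ->
  opL P (opT u w phi) x - opT u w (opL P phi) x =
  opT (fun y => Derive (Derive u) y + 2 * Derive w y)
      (fun y => Derive (Derive w) y - u y * Derive P y - 2 * Derive u y * P y) phi x
  + 2 * Derive u x * opL P phi x.
Proof.
  intros HP Hu Hw Hphi.
  assert (E : forall f y, smooth f -> ex_derive f y) by (intros; apply smooth_ex_derive; auto).
  assert (D1 : forall y, Derive (opT u w phi) y =
    Derive u y * Derive phi y + u y * Derive (Derive phi) y
    + (Derive w y * phi y + w y * Derive phi y)).
  { intros y; apply is_derive_unique; unfold opT; auto_derive.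
    - repeat split; apply E; auto using smooth_Derive.
    - eta_Derive; ring. }
  assert (D2 : Derive (Derive (opT u w phi)) x =
    Derive (Derive u) x * Derive phi x + 2 * Derive u x * Derive (Derive phi) x
    + u x * Derive (Derive (Derive phi)) x + Derive (Derive w) x * phi x
    + 2 * Derive w x * Derive phi x + w x * Derive (Derive phi) x).
  { rewrite (Derive_ext _ _ x D1); apply is_derive_unique; auto_derive.
    - repeat split; apply E; auto using smooth_Derive.
    - eta_Derive; ring. }
  assert (D3 : Derive (opL P phi) x =
    Derive (Derive (Derive phi)) x + Derive P x * phi x + P x * Derive phi x).
  { apply is_derive_unique; unfold opL; change (Derive_n phi 2) with (Derive (Derive phi)).
    auto_derive.
    - repeat split; apply E; auto using smooth_Derive.
    - eta_Derive; ring. }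
  unfold opL at 1; change (Derive_n ?f 2 x) with (Derive (Derive f) x); rewrite D2.
  unfold opT at 2; rewrite D3; unfold opT, opL; change (Derive_n ?f 2 x) with (Derive (Derive f) x).
  ring.
Qed.

(** * Expansions [sum_j (U_j D + W_j) L^j] *)

Definition Lexp (V : R -> R) (J : nat) (U W : nat -> R -> R) (psi : R -> R) (x : R) : R :=
  sum_f_R0 (fun j => opT (U j) (W j) (Lpow V j psi) x) J.

Definition Lexp_coefs (V : R -> R) (J : nat) (U W : nat -> R -> R) (k : nat) (x : R) : R :=
  sum_f_R0 (fun j => T_coefs (U j) (W j) (Lpow_coefs V j) k x) J.

(* The coefficient of [D^(2j)] in [D o L^j]. *)
Definition Lpow_subleading (V : R -> R) (j : nat) : R -> R := dcoefs (Lpow_coefs V j) (2 * j).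

Lemma Lexp_S V J U W psi x : Lexp V (S J) U W psi x =
  Lexp V J U W psi x + opT (U (S J)) (W (S J)) (Lpow V (S J) psi) x.
Proof. reflexivity. Qed.

Lemma Lexp_ext V J U W U' W' psi x :
  (forall j, (j <= J)%nat -> U j x = U' j x /\ W j x = W' j x) ->
  Lexp V J U W psi x = Lexp V J U' W' psi x.
Proof.
  intros H; apply sum_eq; intros j Hj; unfold opT.
  destruct (H j Hj) as [-> ->]; reflexivity.
Qed.

Section L_expansions.

Variable V : R -> R.
Hypothesis HV : smooth V.

Lemma opT_Lpow u w j psi x : smooth psi ->
  opT u w (Lpow V j psi) x = diffop (S (2 * j)) (T_coefs u w (Lpow_coefs V j)) psi x.
Proof.
  intros Hpsi; rewrite Lpow_diffop by auto.
  apply opT_diffop; auto using smooth_Lpow_coefs, supported_Lpow_coefs.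
Qed.

Lemma smooth_Lpow_subleading j : smooth (Lpow_subleading V j).
Proof. exact (smooth_dcoefs _ (smooth_Lpow_coefs V HV j) _). Qed.

Lemma supported_Lexp_coefs J U W : supported (S (2 * J)) (Lexp_coefs V J U W).
Proof.
  intros k x Hk; apply sum_eq_R0; intros j Hj.
  apply (supported_T_coefs (2 * j)); [apply supported_Lpow_coefs | lia].
Qed.

Lemma smooth_Lexp_coefs J U W :
  (forall j, (j <= J)%nat -> smooth (U j) /\ smooth (W j)) -> smooth_coefs (Lexp_coefs V J U W).
Proof.
  intros HUW k; apply (smooth_sum (fun j => T_coefs (U j) (W j) (Lpow_coefs V j) k)).
  intros j Hj; destruct (HUW j Hj); apply smooth_T_coefs; auto using smooth_Lpow_coefs.
Qed.

Lemma Lexp_diffop J U W psi x : smooth psi ->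
  Lexp V J U W psi x = diffop (S (2 * J)) (Lexp_coefs V J U W) psi x.
Proof.
  intros Hpsi; induction J as [|J IHJ]; [apply opT_Lpow, Hpsi|].
  rewrite Lexp_S, IHJ, opT_Lpow by auto.
  rewrite <- (diffop_supported (S (2 * J)) (S (2 * S J)) (Lexp_coefs V J U W))
    by (apply supported_Lexp_coefs || lia).
  rewrite <- diffop_plus; reflexivity.
Qed.

Lemma Lexp_coefs_high J U W k x : (2 * J <= k)%nat ->
  Lexp_coefs V J U W k x = T_coefs (U J) (W J) (Lpow_coefs V J) k x.
Proof.
  intros Hk; destruct J as [|J]; [reflexivity|].
  change (Lexp_coefs V J U W k x + T_coefs (U (S J)) (W (S J)) (Lpow_coefs V (S J)) k x
    = T_coefs (U (S J)) (W (S J)) (Lpow_coefs V (S J)) k x).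
  rewrite (supported_Lexp_coefs J U W k x) by lia; ring.
Qed.

Lemma Lexp_coefs_top J U W x : Lexp_coefs V J U W (S (2 * J)) x = U J x.
Proof.
  rewrite Lexp_coefs_high, T_coefs_top, Lpow_coefs_top by (auto using supported_Lpow_coefs).
  ring.
Qed.

Lemma Lexp_coefs_next J U W x :
  Lexp_coefs V J U W (2 * J) x = U J x * Lpow_subleading V J x + W J x.
Proof.
  rewrite Lexp_coefs_high by lia; unfold T_coefs; rewrite Lpow_coefs_top.
  unfold Lpow_subleading; ring.
Qed.

Lemma Lexp_top_zero J U W :
  (forall psi, smooth psi -> forall x, Lexp V J U W psi x = 0) ->
  forall x, U J x = 0 /\ W J x = 0.
Proof.
  intros Hzero x.
  assert (Hc : forall k, (k <= S (2 * J))%nat -> Lexp_coefs V J U W k x = 0).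
  { apply diffop_coefs_zero; intros psi Hpsi; rewrite <- Lexp_diffop; auto. }
  pose proof (Hc (S (2 * J)) (le_n _)) as Htop.
  pose proof (Hc (2 * J)%nat (Nat.le_succ_diag_r _)) as Hnext.
  rewrite Lexp_coefs_top in Htop; rewrite Lexp_coefs_next, Htop in Hnext; split; lra.
Qed.

Lemma Lexp_zero J U W :
  (forall psi, smooth psi -> forall x, Lexp V J U W psi x = 0) ->
  forall j, (j <= J)%nat -> forall x, U j x = 0 /\ W j x = 0.
Proof.
  induction J as [|J IHJ]; intros Hzero j Hj.
  - replace j with O by lia; apply Lexp_top_zero, Hzero.
  - pose proof (Lexp_top_zero (S J) U W Hzero) as Htop.
    destruct (Nat.eq_dec j (S J)) as [->|Hne]; [exact Htop|].
    apply IHJ; [|lia]; intros psi Hpsi x.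
    rewrite <- (Hzero psi Hpsi x), Lexp_S; unfold opT; destruct (Htop x) as [-> ->]; ring.
Qed.

(* Peel off the top two coefficients with [T(u, w) L^J], then recurse on order [2J - 1]. *)
Lemma Lexp_division J c : (forall k, (k <= S (2 * J))%nat -> smooth (c k)) ->
  exists U W : nat -> R -> R,
    (forall j, (j <= J)%nat -> smooth (U j) /\ smooth (W j)) /\
    (forall x, U J x = c (S (2 * J)) x) /\
    forall psi, smooth psi -> forall x, diffop (S (2 * J)) c psi x = Lexp V J U W psi x.
Proof.
  revert c; induction J as [|J IHJ]; intros c Hc.
  - exists (fun _ => c 1%nat), (fun _ => c O); split; [|split].
    + intros j _; split; apply Hc; lia.
    + reflexivity.
    + intros psi Hpsi x; unfold Lexp, opT, diffop; simpl; eta_Derive; ring.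
  - set (u := c (S (2 * S J))).
    set (w := fun x => c (2 * S J)%nat x - u x * Lpow_subleading V (S J) x).
    set (d := fun k x => c k x - T_coefs u w (Lpow_coefs V (S J)) k x).
    assert (Hu : smooth u) by (apply Hc; lia).
    assert (Hw : smooth w).
    { apply smooth_minus; [apply Hc; lia | apply smooth_mult; auto using smooth_Lpow_subleading]. }
    assert (Hd : forall k, (k <= S (2 * J))%nat -> smooth (d k)).
    { intros k Hk; apply smooth_minus; [apply Hc; lia|].
      apply smooth_T_coefs; auto using smooth_Lpow_coefs. }
    destruct (IHJ d Hd) as [U [W [HUW [_ Hexp]]]].
    exists (fun j => if Nat.eqb j (S J) then u else U j),
           (fun j => if Nat.eqb j (S J) then w else W j).
    split; [|split].
    + intros j Hj; destruct (Nat.eqb_spec j (S J)); [auto | apply HUW; lia].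
    + intros x; rewrite Nat.eqb_refl; reflexivity.
    + intros psi Hpsi x.
      assert (Hd_top : d (S (2 * S J)) x = 0).
      { unfold d; rewrite T_coefs_top, Lpow_coefs_top by apply supported_Lpow_coefs.
        unfold u; ring. }
      assert (Hd_next : d (2 * S J)%nat x = 0).
      { unfold d, T_coefs; rewrite Lpow_coefs_top; unfold w, Lpow_subleading; ring. }
      rewrite Lexp_S, Nat.eqb_refl.
      rewrite (Lexp_ext V J _ _ U W)
        by (intros j Hj; destruct (Nat.eqb_spec j (S J)); [lia | auto]).
      rewrite <- Hexp, opT_Lpow by auto.
      transitivity (diffop (S (2 * S J)) d psi x
                    + diffop (S (2 * S J)) (T_coefs u w (Lpow_coefs V (S J))) psi x).
      { rewrite <- diffop_plus; apply diffop_ext; intros k _; unfold d; ring. }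
      replace (2 * S J)%nat with (S (S (2 * J))) in * by lia.
      rewrite (diffop_S (S (S (2 * J))) d), (diffop_S (S (2 * J)) d), Hd_top, Hd_next; ring.
Qed.

Lemma smooth_opT u w phi : smooth u -> smooth w -> smooth phi -> smooth (opT u w phi).
Proof. intros; apply smooth_plus; apply smooth_mult; auto using smooth_Derive. Qed.

Lemma smooth_Lexp J U W psi : (forall j, (j <= J)%nat -> smooth (U j) /\ smooth (W j)) ->
  smooth psi -> smooth (Lexp V J U W psi).
Proof.
  intros HUW Hpsi; apply (smooth_sum (fun j => opT (U j) (W j) (Lpow V j psi))).
  intros j Hj; destruct (HUW j Hj); apply smooth_opT; auto using smooth_Lpow.
Qed.

Lemma opL_plus f g x : smooth f -> smooth g ->
  opL V (fun y => f y + g y) x = opL V f x + opL V g x.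
Proof.
  intros Hf Hg; unfold opL; rewrite Derive_n_plus; [ring| |];
    apply filter_forall; intros y k _; auto.
Qed.

Definition comm_U (U W : nat -> R -> R) (j : nat) (x : R) : R :=
  Derive (Derive (U j)) x + 2 * Derive (W j) x.

Definition comm_W (U W : nat -> R -> R) (j : nat) (x : R) : R :=
  Derive (Derive (W j)) x - U j x * Derive V x - 2 * Derive (U j) x * V x
  + match j with O => 0 | S i => 2 * Derive (U i) x end.

Lemma comm_opL_opT_Lpow u w j psi x : smooth u -> smooth w -> smooth psi ->
  opL V (opT u w (Lpow V j psi)) x - opT u w (Lpow V j (opL V psi)) x =
  opT (fun y => Derive (Derive u) y + 2 * Derive w y)
      (fun y => Derive (Derive w) y - u y * Derive V y - 2 * Derive u y * V y)
      (Lpow V j psi) x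
  + 2 * Derive u x * Lpow V (S j) psi x.
Proof. intros; rewrite Lpow_opL; apply comm_opL_opT; auto using smooth_Lpow. Qed.

(* The term [2 U_j' L^(j+1)] left over by [[L, T_j L^j]] is absorbed into the slot [j + 1]. *)
Lemma comm_opL_Lexp J U W psi x :
  (forall j, (j <= J)%nat -> smooth (U j) /\ smooth (W j)) -> smooth psi ->
  opL V (Lexp V J U W psi) x - Lexp V J U W (opL V psi) x
  = Lexp V J (comm_U U W) (comm_W U W) psi x + 2 * Derive (U J) x * Lpow V (S J) psi x.
Proof.
  intros HUW Hpsi; induction J as [|J IHJ].
  - destruct (HUW O (le_n O)).
    change (opL V (opT (U O) (W O) (Lpow V 0 psi)) x - opT (U O) (W O) (Lpow V 0 (opL V psi)) x
      = opT (comm_U U W O) (comm_W U W O) (Lpow V 0 psi) x + 2 * Derive (U O) x * Lpow V 1 psi x).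
    rewrite comm_opL_opT_Lpow by auto; unfold opT, comm_U, comm_W; ring.
  - destruct (HUW (S J) (le_n _)).
    change (Lexp V (S J) U W psi)
      with (fun y => Lexp V J U W psi y + opT (U (S J)) (W (S J)) (Lpow V (S J) psi) y).
    rewrite opL_plus, !Lexp_S
      by (auto using smooth_opT, smooth_Lpow, smooth_Lexp with arith).
    pose proof (comm_opL_opT_Lpow (U (S J)) (W (S J)) (S J) psi x H H0 Hpsi) as Hterm.
    pose proof (IHJ (fun j Hj => HUW j (le_S _ _ Hj))) as IH.
    assert (Habsorb : opT (comm_U U W (S J)) (comm_W U W (S J)) (Lpow V (S J) psi) x =
      opT (fun y => Derive (Derive (U (S J))) y + 2 * Derive (W (S J)) y)
          (fun y => Derive (Derive (W (S J))) y - U (S J) y * Derive V y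
                    - 2 * Derive (U (S J)) y * V y) (Lpow V (S J) psi) x
      + 2 * Derive (U J) x * Lpow V (S J) psi x)
      by (unfold opT, comm_U, comm_W; ring).
    lra.
Qed.

Lemma Lexp_commutes_iff J U W :
  (forall j, (j <= J)%nat -> smooth (U j) /\ smooth (W j)) -> (forall x, Derive (U J) x = 0) ->
  (forall psi, smooth psi -> forall x, opL V (Lexp V J U W psi) x - Lexp V J U W (opL V psi) x = 0)
  <-> (forall j, (j <= J)%nat -> forall x, comm_U U W j x = 0 /\ comm_W U W j x = 0).
Proof.
  intros HUW HUJ; split.
  - intros Hcomm; apply Lexp_zero; intros psi Hpsi x.
    rewrite <- (Hcomm psi Hpsi x), comm_opL_Lexp, HUJ by auto; ring.
  - intros Hzero psi Hpsi x; rewrite comm_opL_Lexp, HUJ by auto.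
    rewrite Rmult_0_r, Rmult_0_l, Rplus_0_r; apply sum_eq_R0; intros j Hj; unfold opT.
    destruct (Hzero j Hj x) as [-> ->]; ring.
Qed.

End L_expansions.

Lemma opQ_diffop N q c psi x :
  (forall y, c (S (2 * N)) y = 1) -> (forall k, (k <= 2 * N)%nat -> c k x = q k x) ->
  opQ N q psi x = diffop (S (2 * N)) c psi x.
Proof.
  intros Htop Hc; unfold opQ; rewrite diffop_S, Htop, Nat.add_1_r, Rmult_1_l, Rplus_comm.
  f_equal; symmetry; apply (diffop_ext (2 * N) c q psi x Hc).
Qed.

Section Commuting_operators.

Variable V : R -> R.
Hypothesis HV : smooth V.

Lemma opQ_commutes_iff N q U W :
  (forall psi, smooth psi -> opQ N q psi = Lexp V N U W psi) ->
  (forall psi, smooth psi -> forall x, opQ N q (opL V psi) x - opL V (opQ N q psi) x = 0) <->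
  (forall psi, smooth psi -> forall x, opL V (Lexp V N U W psi) x - Lexp V N U W (opL V psi) x = 0).
Proof.
  intros HQ; split; intros Hcomm psi Hpsi x; specialize (Hcomm psi Hpsi x);
    rewrite !HQ in * by auto using smooth_opL; lra.
Qed.

Lemma commuting_Q_iff_Lexp N :
  (exists q : nat -> R -> R,
     (forall j, (j <= 2 * N)%nat -> smooth (q j)) /\
     (forall psi, smooth psi -> forall x, opQ N q (opL V psi) x - opL V (opQ N q psi) x = 0))
  <->
  (exists U W : nat -> R -> R,
     (forall j, (j <= N)%nat -> smooth (U j) /\ smooth (W j)) /\ (forall x, U N x = 1) /\
     (forall j, (j <= N)%nat -> forall x, comm_U U W j x = 0 /\ comm_W V U W j x = 0)).
Proof.
  split.
  - intros [q [Hq Hcomm]].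
    set (c := fun k => if Nat.eqb k (S (2 * N)) then fun _ => 1 else q k).
    assert (Hc : forall k, (k <= S (2 * N))%nat -> smooth (c k)).
    { intros k Hk; unfold c; destruct (Nat.eqb_spec k (S (2 * N)));
        [apply smooth_const | apply Hq; lia]. }
    destruct (Lexp_division V HV N c Hc) as [U [W [HUW [HUN Hexp]]]].
    assert (HU1 : forall x, U N x = 1)
      by (intros x; rewrite HUN; unfold c; rewrite Nat.eqb_refl; reflexivity).
    exists U, W; split; [exact HUW | split; [exact HU1|]].
    apply (Lexp_commutes_iff V HV N U W HUW); [intros x; apply (Derive_const_fun _ 1 x HU1)|].
    apply (opQ_commutes_iff N q U W); [|exact Hcomm].
    intros psi Hpsi; apply functional_extensionality; intros x; rewrite <- Hexp by auto.
    apply opQ_diffop; intros; unfold c; [rewrite Nat.eqb_refl; reflexivity|].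
    destruct (Nat.eqb_spec k (S (2 * N))); [lia | reflexivity].
  - intros [U [W [HUW [HU1 Hzero]]]].
    exists (Lexp_coefs V N U W); split; [intros j _; apply smooth_Lexp_coefs; auto|].
    apply (opQ_commutes_iff N _ U W).
    + intros psi Hpsi; apply functional_extensionality; intros x.
      rewrite Lexp_diffop by auto; apply opQ_diffop; [|reflexivity].
      intros y; rewrite Lexp_coefs_top; apply HU1.
    + apply Lexp_commutes_iff; auto; intros x; apply (Derive_const_fun _ 1 x HU1).
Qed.

End Commuting_operators.

(** * The Lenard recursion *)

Definition lenard (V : R -> R) (N : nat) (a : nat -> R -> R) : Prop :=
  forall j, (j <= N)%nat -> forall x,
    -/2 * Derive (Derive (Derive (a j))) x - a j x * Derive V x - 2 * Derive (a j) x * V x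
    = match j with O => 0 | S i => 2 * Derive (a i) x end.

(* On solutions of [L psi = - eps psi], [sum_j (U_j D + W_j) L^j] acts as
   [sum_j (U_j D + W_j) (-eps)^j]; the factor [(-1)^N] normalizes the top coefficient. *)
Definition signed (N : nat) (U : nat -> R -> R) (j : nat) (x : R) : R := (-1) ^ (N - j) * U j x.

Definition neg_half_Derive (a : nat -> R -> R) (j : nat) (x : R) : R := -/2 * Derive (a j) x.

Lemma Derive_scal_fun s f : Derive (fun x => s * f x) = fun x => s * Derive f x.
Proof. apply functional_extensionality; intros x; apply Derive_scal. Qed.

Lemma sign_pred N i : (S i <= N)%nat -> (-1) ^ (N - i) = - (-1) ^ (N - S i).
Proof. intros Hi; replace (N - i)%nat with (S (N - S i)) by lia; simpl; ring. Qed.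

Lemma lenard_of_comm_zero V N U W :
  (forall j, (j <= N)%nat -> smooth (U j) /\ smooth (W j)) ->
  (forall j, (j <= N)%nat -> forall x, comm_U U W j x = 0 /\ comm_W V U W j x = 0) ->
  lenard V N (signed N U).
Proof.
  intros HUW Hzero j Hj x; destruct (HUW j Hj) as [HU HW].
  assert (HW2 : Derive (Derive (W j)) x = -/2 * Derive (Derive (Derive (U j))) x).
  { assert (H : Derive (fun y => Derive (Derive (U j)) y + 2 * Derive (W j) y) x = 0)
      by (apply (Derive_const_fun _ 0); intros y; exact (proj1 (Hzero j Hj y))).
    rewrite Derive_plus, Derive_scal in H; [lra | |];
      apply smooth_ex_derive; auto using smooth_Derive, smooth_scal. }
  assert (Hres : -/2 * Derive (Derive (Derive (U j))) x - U j x * Derive V x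
                 - 2 * Derive (U j) x * V x
                 = - match j with O => 0 | S i => 2 * Derive (U i) x end).
  { destruct (Hzero j Hj x) as [_ HWj]; unfold comm_W in HWj; rewrite HW2 in HWj; lra. }
  unfold signed; rewrite !Derive_scal_fun.
  transitivity ((-1) ^ (N - j) * (-/2 * Derive (Derive (Derive (U j))) x - U j x * Derive V x
                                  - 2 * Derive (U j) x * V x)); [ring|].
  rewrite Hres; destruct j as [|i]; [ring|].
  rewrite Derive_scal_fun, (sign_pred N i Hj); ring.
Qed.

Lemma comm_zero_of_lenard V N a : lenard V N a ->
  forall j, (j <= N)%nat -> forall x,
    comm_U (signed N a) (neg_half_Derive (signed N a)) j x = 0
    /\ comm_W V (signed N a) (neg_half_Derive (signed N a)) j x = 0.
Proof.
  intros Ha j Hj x; unfold comm_U, comm_W, neg_half_Derive, signed; rewrite !Derive_scal_fun.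
  split; [field|].
  transitivity ((-1) ^ (N - j) * (-/2 * Derive (Derive (Derive (a j))) x - a j x * Derive V x
                                  - 2 * Derive (a j) x * V x)
                + match j with O => 0 | S i => 2 * ((-1) ^ (N - i) * Derive (a i) x) end).
  { destruct j; rewrite ?Derive_scal_fun; ring. }
  rewrite (Ha j Hj x); destruct j as [|i]; [ring|].
  rewrite (sign_pred N i Hj); ring.
Qed.

Lemma Lexp_comm_zero_iff_lenard V N :
  (exists U W : nat -> R -> R,
     (forall j, (j <= N)%nat -> smooth (U j) /\ smooth (W j)) /\ (forall x, U N x = 1) /\
     (forall j, (j <= N)%nat -> forall x, comm_U U W j x = 0 /\ comm_W V U W j x = 0))
  <->
  (exists a : nat -> R -> R,
     (forall j, (j <= N)%nat -> smooth (a j)) /\ (forall x, a N x = 1) /\ lenard V N a).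
Proof.
  assert (Htop : forall U x, signed N U N x = U N x)
    by (intros U x; unfold signed; rewrite Nat.sub_diag; ring).
  split.
  - intros [U [W [HUW [HU1 Hzero]]]]; exists (signed N U); split; [|split].
    + intros j Hj; apply smooth_scal, (proj1 (HUW j Hj)).
    + intros x; rewrite Htop; apply HU1.
    + apply (lenard_of_comm_zero V N U W HUW Hzero).
  - intros [a [Ha [Ha1 Hlen]]].
    exists (signed N a), (neg_half_Derive (signed N a)); split; [|split].
    + intros j Hj; split; [|apply smooth_scal, smooth_Derive]; apply smooth_scal, Ha, Hj.
    + intros x; rewrite Htop; apply Ha1.
    + apply comm_zero_of_lenard, Hlen.
Qed.

(** * Polynomials in the spectral parameter *)

Lemma continuous_zero_off_origin g : continuous g 0 -> (forall e, e <> 0 -> g e = 0) -> g 0 = 0.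
Proof.
  intros Hg Hoff.
  assert (Hlim : is_lim g 0 (g 0))
    by exact (is_lim_comp_continuous (fun e => e) g 0 0 (is_lim_id 0) Hg).
  assert (Hlim0 : is_lim g 0 0).
  { apply (is_lim_ext_loc (fun _ => 0)); [|apply is_lim_const].
    exists (mkposreal 1 Rlt_0_1); intros y _ Hy; symmetry; apply Hoff, Hy. }
  apply is_lim_unique in Hlim, Hlim0; rewrite Hlim in Hlim0; injection Hlim0; auto.
Qed.

Lemma poly_coefs_zero M (d : nat -> R) :
  (forall e, sum_f_R0 (fun j => d j * e ^ j) M = 0) -> forall j, (j <= M)%nat -> d j = 0.
Proof.
  revert d; induction M as [|M IHM]; intros d Hd j Hj.
  - replace j with O by lia; specialize (Hd 1); simpl in Hd; lra.
  - set (g := fun e => sum_f_R0 (fun j => d (S j) * e ^ j) M).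
    assert (Hsplit : forall e, sum_f_R0 (fun j => d j * e ^ j) (S M) = d O + e * g e).
    { intros e; rewrite decomp_sum by lia; unfold g; rewrite scal_sum; simpl.
      f_equal; [ring | apply sum_eq; intros; ring]. }
    assert (Hd0 : d O = 0) by (specialize (Hd 0); rewrite Hsplit in Hd; lra).
    assert (Hg : forall e, g e = 0).
    { assert (Hoff : forall e, e <> 0 -> g e = 0).
      { intros e He; specialize (Hd e); rewrite Hsplit, Hd0, Rplus_0_l in Hd.
        apply Rmult_integral in Hd as [He0|]; [contradiction | assumption]. }
      intros e; destruct (Req_dec e 0) as [->|He]; [|apply Hoff, He].
      assert (Hsmooth : smooth g).
      { apply (smooth_sum (fun j y => d (S j) * y ^ j)); intros.
        apply smooth_scal; intros n y; apply ex_derive_n_pow. }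
      apply (continuous_zero_off_origin g); [|exact Hoff].
      exact (ex_derive_continuous g 0 (smooth_ex_derive g 0 Hsmooth)). }
    destruct j as [|j]; [exact Hd0|].
    apply (IHM (fun j => d (S j))); [exact Hg | lia].
Qed.

(* The defect of the [j]-th Lenard relation at a point, in terms of the values
   [a3 j], [a0 j], [a1 j] of [a_j'''], [a_j], [a_j'] and of [vp = V'], [v = V]. *)
Definition lenard_defect (a3 a0 a1 : nat -> R) (vp v : R) (j : nat) : R :=
  -/2 * a3 j - a0 j * vp - 2 * a1 j * v - match j with O => 0 | S i => 2 * a1 i end.

Lemma lenard_defect_expansion N (a3 a0 a1 : nat -> R) vp v e :
  -/2 * sum_f_R0 (fun j => a3 j * e ^ j) N - sum_f_R0 (fun j => a0 j * e ^ j) N * vp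
    - 2 * sum_f_R0 (fun j => a1 j * e ^ j) N * (v + e)
  = sum_f_R0 (fun j => lenard_defect a3 a0 a1 vp v j * e ^ j) N - 2 * a1 N * e ^ S N.
Proof.
  unfold lenard_defect; induction N as [|N IHN]; [simpl; ring|].
  rewrite !tech5; cbn [pow] in *.
  transitivity ((-/2 * sum_f_R0 (fun j => a3 j * e ^ j) N - sum_f_R0 (fun j => a0 j * e ^ j) N * vp
                 - 2 * sum_f_R0 (fun j => a1 j * e ^ j) N * (v + e))
                + (-/2 * a3 (S N) - a0 (S N) * vp - 2 * a1 (S N) * (v + e)) * (e * e ^ N));
    [ring | rewrite IHN; ring].
Qed.

Lemma lenard_defect_coefs N (a3 a0 a1 : nat -> R) vp v :
  (forall e, -/2 * sum_f_R0 (fun j => a3 j * e ^ j) N - sum_f_R0 (fun j => a0 j * e ^ j) N * vp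
               - 2 * sum_f_R0 (fun j => a1 j * e ^ j) N * (v + e) = 0) ->
  forall j, (j <= N)%nat -> lenard_defect a3 a0 a1 vp v j = 0.
Proof.
  intros Hzero j Hj.
  set (d := fun j => if Nat.leb j N then lenard_defect a3 a0 a1 vp v j else - 2 * a1 N).
  assert (Hd : forall e, sum_f_R0 (fun j => d j * e ^ j) (S N) = 0).
  { intros e; rewrite <- (Hzero e), lenard_defect_expansion, tech5.
    rewrite (sum_eq (fun j => d j * e ^ j) (fun j => lenard_defect a3 a0 a1 vp v j * e ^ j))
      by (intros i Hi; unfold d; rewrite (proj2 (Nat.leb_le i N) Hi); reflexivity).
    unfold d; rewrite (proj2 (Nat.leb_gt (S N) N)) by lia; ring. }
  pose proof (poly_coefs_zero (S N) d Hd j ltac:(lia)) as Hdj.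
  unfold d in Hdj; rewrite (proj2 (Nat.leb_le j N) Hj) in Hdj; exact Hdj.
Qed.

(** * Lie symmetries of [L + eps] *)

Lemma opLeps_eq V e : opLeps V e = opL (fun y => V y + e).
Proof.
  apply functional_extensionality; intros phi; apply functional_extensionality; intros x.
  unfold opLeps, opL; ring.
Qed.

Lemma opQhat_eq N a b e : opQhat N a b e = opT (polyeps N a e) (polyeps N b e).
Proof. reflexivity. Qed.

Definition lie_conditions (P u w : R -> R) : Prop := forall x,
  Derive (Derive u) x + 2 * Derive w x = 0
  /\ Derive (Derive w) x - u x * Derive P x - 2 * Derive u x * P x = 0.

Lemma symmetry_of_lie_conditions P u w psi x :
  smooth P -> smooth u -> smooth w -> smooth psi -> lie_conditions P u w ->
  opL P (opT u w psi) x - opT u w (opL P psi) x = 2 * Derive u x * opL P psi x.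
Proof.
  intros HP Hu Hw Hpsi Hlie; rewrite comm_opL_opT by auto; unfold opT at 1.
  destruct (Hlie x) as [-> ->]; ring.
Qed.

(* [[L_P, u D + w] - rho L_P] is a differential operator of order two that vanishes identically. *)
Lemma lie_conditions_of_symmetry P u w (rho : R -> R) :
  smooth P -> smooth u -> smooth w ->
  (forall psi, smooth psi -> forall x,
     opL P (opT u w psi) x - opT u w (opL P psi) x = rho x * opL P psi x) ->
  lie_conditions P u w.
Proof.
  intros HP Hu Hw Hsym x.
  set (cU := Derive (Derive u) x + 2 * Derive w x).
  set (cW := Derive (Derive w) x - u x * Derive P x - 2 * Derive u x * P x).
  set (cL := 2 * Derive u x - rho x).
  set (c := fun k (_ : R) => match k with O => cW + cL * P x | 1%nat => cU | _ => cL end).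
  assert (Hc : forall k, (k <= 2)%nat -> c k x = 0).
  { apply diffop_coefs_zero; intros psi Hpsi.
    pose proof (Hsym psi Hpsi x) as H; rewrite comm_opL_opT in H by auto.
    unfold diffop, c; simpl sum_f_R0; unfold opT, opL in H |- *.
    change (Derive_n psi 2 x) with (Derive (Derive psi) x) in *.
    fold cU cW in H; unfold cL; simpl Derive_n; eta_Derive; lra. }
  pose proof (Hc O ltac:(lia)) as H0; pose proof (Hc 1%nat ltac:(lia)) as H1;
  pose proof (Hc 2%nat ltac:(lia)) as H2; unfold c in H0, H1, H2.
  rewrite H2 in H0; split; [exact H1 | lra].
Qed.

Lemma Derive_shift f e x : smooth f -> Derive (fun y => f y + e) x = Derive f x.
Proof.
  intros Hf; rewrite Derive_plus, Derive_const;
    [ring | apply smooth_ex_derive, Hf | apply ex_derive_const].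
Qed.

Lemma smooth_polyeps N c e : (forall j, (j <= N)%nat -> smooth (c j)) -> smooth (polyeps N c e).
Proof.
  intros Hc; apply (smooth_sum (fun j y => c j y * e ^ j)); intros j Hj.
  apply (smooth_mult (c j) (fun _ => e ^ j)); [apply Hc, Hj | apply smooth_const].
Qed.

Lemma Derive_polyeps N c e : (forall j, (j <= N)%nat -> smooth (c j)) ->
  Derive (polyeps N c e) = polyeps N (fun j => Derive (c j)) e.
Proof.
  intros Hc; apply functional_extensionality; intros x; unfold polyeps.
  rewrite (Derive_sum (fun j y => c j y * e ^ j))
    by (intros j Hj; apply (ex_derive_mult (c j) (fun _ => e ^ j));
        [apply smooth_ex_derive, Hc, Hj | apply ex_derive_const]).
  apply sum_eq; intros j _; apply Derive_scal_l.
Qed.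

Section Lenard_and_symmetries.

Variable V : R -> R.
Hypothesis HV : smooth V.

Lemma lenard_of_lie_conditions N a b :
  (forall j, (j <= N)%nat -> smooth (a j) /\ smooth (b j)) ->
  (forall e, lie_conditions (fun y => V y + e) (polyeps N a e) (polyeps N b e)) ->
  lenard V N a.
Proof.
  intros Hab Hlie j Hj x.
  assert (Ha : forall j, (j <= N)%nat -> smooth (a j)) by (intros i Hi; exact (proj1 (Hab i Hi))).
  assert (Hb : forall j, (j <= N)%nat -> smooth (b j)) by (intros i Hi; exact (proj2 (Hab i Hi))).
  assert (Hthird : forall e, polyeps N (fun j => Derive (Derive (Derive (a j)))) e x
                             + 2 * polyeps N (fun j => Derive (Derive (b j))) e x = 0).
  { intros e.
    pose proof (smooth_polyeps N a e Ha) as HA; pose proof (smooth_polyeps N b e Hb) as HB.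
    assert (H : Derive (fun y => Derive (Derive (polyeps N a e)) y
                                 + 2 * Derive (polyeps N b e) y) x = 0)
      by (apply (Derive_const_fun _ 0); intros y; exact (proj1 (Hlie e y))).
    rewrite Derive_plus, Derive_scal in H
      by (apply smooth_ex_derive; auto using smooth_Derive, smooth_scal).
    rewrite !Derive_polyeps in H by (intros; smooth_Derives; auto); exact H. }
  assert (Hsecond : forall e, polyeps N (fun j => Derive (Derive (b j))) e x
                              - polyeps N a e x * Derive V x
                              - 2 * polyeps N (fun j => Derive (a j)) e x * (V x + e) = 0).
  { intros e; destruct (Hlie e x) as [_ H].
    rewrite Derive_shift, !Derive_polyeps in H by (intros; smooth_Derives; auto).
    exact H. }
  assert (Hdefect : lenard_defect (fun j => Derive (Derive (Derive (a j))) x) (fun j => a j x)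
                      (fun j => Derive (a j) x) (Derive V x) (V x) j = 0).
  { apply (lenard_defect_coefs N); [|exact Hj]; intros e.
    specialize (Hthird e); specialize (Hsecond e); unfold polyeps in *; lra. }
  unfold lenard_defect in Hdefect; lra.
Qed.

Lemma lie_conditions_of_lenard N a :
  (forall j, (j <= N)%nat -> smooth (a j)) -> lenard V N a -> (forall x, a N x = 1) ->
  forall e, lie_conditions (fun y => V y + e) (polyeps N a e) (polyeps N (neg_half_Derive a) e).
Proof.
  intros Ha Hlen Ha1 e x.
  assert (Hnh : forall j, Derive (neg_half_Derive a j) = fun y => -/2 * Derive (Derive (a j)) y)
    by (intros j; apply Derive_scal_fun).
  assert (Hnh_smooth : forall j, (j <= N)%nat -> smooth (neg_half_Derive a j))
    by (intros j Hj; apply smooth_scal, smooth_Derive, Ha, Hj).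
  rewrite Derive_shift, !Derive_polyeps by (auto; intros; smooth_Derives; auto).
  unfold polyeps; split.
  - rewrite scal_sum, <- sum_plus; apply sum_eq_R0; intros j _; rewrite Hnh; field.
  - transitivity (-/2 * sum_f_R0 (fun j => Derive (Derive (Derive (a j))) x * e ^ j) N
                  - sum_f_R0 (fun j => a j x * e ^ j) N * Derive V x
                  - 2 * sum_f_R0 (fun j => Derive (a j) x * e ^ j) N * (V x + e)).
    { f_equal; f_equal; rewrite scal_sum.
      apply sum_eq; intros j _; rewrite Hnh, Derive_scal; ring. }
    rewrite lenard_defect_expansion, (Derive_const_fun (a N) 1 x Ha1), sum_eq_R0; [ring|].
    intros j Hj; unfold lenard_defect; rewrite (Hlen j Hj x); ring.
Qed.

Lemma lie_symmetry_iff_lenard N :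
  (exists a b : nat -> R -> R,
     (forall j, (j <= N)%nat -> smooth (a j) /\ smooth (b j)) /\ (forall x, a N x = 1) /\
     exists r : R -> R -> R,
       forall (eps : R) (psi : R -> R), smooth psi -> forall x,
         opLeps V eps (opQhat N a b eps psi) x - opQhat N a b eps (opLeps V eps psi) x
         = r x eps * opLeps V eps psi x)
  <->
  (exists a : nat -> R -> R,
     (forall j, (j <= N)%nat -> smooth (a j)) /\ (forall x, a N x = 1) /\ lenard V N a).
Proof.
  assert (HVe : forall e, smooth (fun y => V y + e))
    by (intros e; apply smooth_plus, smooth_const; exact HV).
  split.
  - intros [a [b [Hab [Ha1 [r Hsym]]]]].
    assert (Ha : forall j, (j <= N)%nat -> smooth (a j)) by (intros j Hj; exact (proj1 (Hab j Hj))).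
    assert (Hb : forall j, (j <= N)%nat -> smooth (b j)) by (intros j Hj; exact (proj2 (Hab j Hj))).
    exists a; split; [exact Ha | split; [exact Ha1|]].
    apply (lenard_of_lie_conditions N a b Hab); intros e.
    apply (lie_conditions_of_symmetry _ _ _ (fun x => r x e)); auto using smooth_polyeps.
    intros psi Hpsi x; rewrite <- opQhat_eq, <- opLeps_eq; apply Hsym, Hpsi.
  - intros [a [Ha [Ha1 Hlen]]].
    assert (Hnh : forall j, (j <= N)%nat -> smooth (neg_half_Derive a j))
      by (intros j Hj; apply smooth_scal, smooth_Derive, Ha, Hj).
    exists a, (neg_half_Derive a); split; [|split; [exact Ha1|]].
    + intros j Hj; split; [apply Ha, Hj | apply Hnh, Hj].
    + exists (fun x e => 2 * Derive (polyeps N a e) x); intros e psi Hpsi x.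
      rewrite opLeps_eq, opQhat_eq.
      apply symmetry_of_lie_conditions; auto using smooth_polyeps, lie_conditions_of_lenard.
Qed.

End Lenard_and_symmetries.

Theorem lemma1 (V : R -> R) (N : nat) :
  smooth V ->
  ((exists q : nat -> R -> R,
      (forall j, (j <= 2 * N)%nat -> smooth (q j)) /\
      (forall psi : R -> R, smooth psi ->
         forall x, opQ N q (opL V psi) x - opL V (opQ N q psi) x = 0))
   <->
   (exists a b : nat -> R -> R,
      (forall j, (j <= N)%nat -> smooth (a j) /\ smooth (b j)) /\
      (forall x, a N x = 1) /\
      exists r : R -> R -> R,
        forall (eps : R) (psi : R -> R), smooth psi ->
          forall x,
            opLeps V eps (opQhat N a b eps psi) x
            - opQhat N a b eps (opLeps V eps psi) x
            = r x eps * opLeps V eps psi x)).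
Proof.
  intros HV.
  rewrite (commuting_Q_iff_Lexp V HV N), Lexp_comm_zero_iff_lenard.
  symmetry; apply (lie_symmetry_iff_lenard V HV N).
Qed.
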